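(* Let $S$ be an indexical set of agents, and let $P$ be a decision protocol for an information exchange $\mathcal{E}$ and failure model $\mathcal{F}$ such that SBA($S$) is valid in $\mathcal{I}_{P,\mathcal{E},\mathcal{F}}$. Then for every agent $i$ and value $v$, the formula $\mathtt{decides}_i(v)\Rightarrow B^S_i\, CB_S\,\exists v$ is valid in $\mathcal{I}_{P,\mathcal{E},\mathcal{F}}$.
   Context: Agents $\mathrm{Agt}=\{1,\dots,n\}$; decision values $V$; actions $A_i=\{\mathtt{noop}\}\cup\{\mathtt{decide}_i(v):v\in V\}$. An information exchange $\mathcal{E}$ gives each agent $i$ a tuple $(L_i,I_i,M_i,\mu_i,\delta_i)$: local states $L_i$ of form $\langle\mathit{init}_i,\mathit{time}_i,\dots\rangle$ ($\mathit{init}_i\in V$ the initial preference), initial states $I_i$, messages $M_i\ni\bot$, $\mu_i:L_i\times A_i\to(\mathrm{Agt}\to M_i)$, $\delta_i:L_i\times A_i\times\prod_jM_j\to L_i$ (preserving $\mathit{init}_i$, incrementing $\mathit{time}_i$). A decision protocol is $P=(P_i:L_i\to A_i)_i$. A failure model $\mathcal{F}=(L^*_e,I_e,\delta_e,\mathit{Adv})$ has environment states, nonempty initial ones, update $\delta_e:L^*_e\times\prod_iA_i\to L^*_e$, and a nonempty set of adversaries $(\Delta^t,\Delta^r,\Delta^s)$ with $\Delta^t,\Delta^r:\mathbb{N}\times\mathrm{Agt}\times\mathrm{Agt}\times\bigcup_iM_i\to\bigcup_iM_i$, $\Delta^s_i:\mathbb{N}\times L_i\to L_i$ (not changing $\mathit{time}_i$).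 Runs $r$ of $\mathcal{I}_{P,\mathcal{E},\mathcal{F}}$: $r(0)=((s_e,\alpha),s_1,\dots,s_n)$ with $s_e\in I_e,\alpha\in\mathit{Adv},s_i\in I_i$; from $r(k)=((s_e,\alpha),s_1,\dots,s_n)$, $r(k+1)=((\delta_e(s_e,(a_1,\dots,a_n)),\alpha),s'_1,\dots,s'_n)$ where $a_i=P_i(s_i)$ (action of $i$ at time $k$), $m_{i,j}=\mu_i(s_i,a_i)(j)$, $m'_{i,j}=\Delta^r(k,i,j,\Delta^t(k,i,j,m_{i,j}))$, $s^*_j=\delta_j(s_j,a_j,(m'_{1,j},\dots,m'_{n,j}))$, $s'_j=\Delta^s_j(k,s^*_j)$. $r_i(m)$ denotes $i$'s local state; $(r,m)\sim_i(r',m')$ iff $r_i(m)=r'_i(m')$; $K_i\phi$ holds iff $\phi$ holds at all $\sim_i$-related points. An indexical set $S$ assigns a set $S(r,m)\subseteq\mathrm{Agt}$ to each point; $i\in S$ holds at $(r,m)$ iff $i\in S(r,m)$. $B^S_i\phi:=K_i(i\in S\Rightarrow\phi)$; $E^B_S\phi:=\bigwedge_{i\in S}B^S_i\phi$ (over $i\in S(r,m)$ at the point of evaluation); $CB_S\phi:=\bigwedge_{k\ge1}(E^B_S)^k\phi$. $\mathtt{decides}_i(v)$ holds at $(r,m)$ iff $P_i(r_i(m))=\mathtt{decide}_i(v)$; $\exists v$ holds at $(r,m)$ iff some agent's initial preference in $r$ is $v$. SBA($S$) is valid in the system if in every run $r$: (Unique-Decision) each agent performs a $\mathtt{decide}$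 action at most once; (Simultaneous-Agreement($S$)) if $i\in S(r,m)$ performs $\mathtt{decide}_i(v)$ at time $m$ then every $j\in S(r,m)$ performs $\mathtt{decide}_j(v)$ at time $m$; (Validity($S$)) if $i\in S(r,m)$ performs $\mathtt{decide}_i(v)$ at time $m$ then some agent has initial preference $v$ in $r$. A formula is valid if it holds at all points. *)

From mathcomp Require Import all_boot.
Set Implicit Arguments.
Unset Strict Implicit.
Unset Printing Implicit Defensive.

(* Actions of agent i: noop or decide_i(v).  The agent index is implicit
   in whose protocol produces the action. *)
Inductive action (V : Type) : Type :=
| noop : action V
| decide : V -> action V.
Arguments noop {V}.

Record InfoExchange (n : nat) (V : Type) := {
  Loc : 'I_n -> Type;
  init : forall i, Loc i -> V;
  time : forall i, Loc i -> nat;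
  InitL : forall i, Loc i -> Prop;
  Msg : Type;                                 (* \bigcup_i M_i *)
  bot : Msg;
  mu : forall i, Loc i -> action V -> 'I_n -> Msg;
  delta : forall i, Loc i -> action V -> ('I_n -> Msg) -> Loc i;
  delta_init : forall (i : 'I_n) (s : Loc i) a ms, init (delta s a ms) = init s;
  delta_time : forall (i : 'I_n) (s : Loc i) a ms, time (delta s a ms) = (time s).+1
}.

Section Model.
Variables (n : nat) (V : Type) (E : InfoExchange n V).

Record Adversary := {
  Dt : nat -> 'I_n -> 'I_n -> Msg E -> Msg E;
  Dr : nat -> 'I_n -> 'I_n -> Msg E -> Msg E;
  Ds : forall i, nat -> Loc E i -> Loc E i;
  Ds_time : forall (i : 'I_n) k (s : Loc E i), time (@Ds i k s) = time s
}.
Arguments Ds a i k s : clear implicits.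

Record FailureModel := {
  Env : Type;
  EnvInit : Env -> Prop;
  EnvInit_ne : exists e, EnvInit e;
  deltaE : Env -> ('I_n -> action V) -> Env;
  Adv : Adversary -> Prop;
  Adv_ne : exists a, Adv a
}.

Definition protocol := forall i : 'I_n, Loc E i -> action V.

Unset Implicit Arguments.
Variable F : FailureModel.
Set Implicit Arguments.

Record gstate := {
  genv : Env F;
  gadv : Adversary;
  gloc : forall i, Loc E i
}.
Arguments gloc g i : clear implicits.

Definition run := nat -> gstate.

Definition is_run (P : protocol) (r : run) : Prop :=
  EnvInit (genv (r 0)) /\ Adv F (gadv (r 0)) /\ (forall i, InitL (gloc (r 0) i)) /\
  forall k,
    let s := r k in
    let al := gadv s in
    let a := fun i => P i (gloc s i) in
    genv (r k.+1) = deltaE (genv s) a /\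
    gadv (r k.+1) = al /\
    forall j, gloc (r k.+1) j =
      Ds al j k (delta (gloc s j) (a j)
        (fun i => Dr al k i j (Dt al k i j (mu (gloc s i) (a i) j)))).

Definition formula := run -> nat -> Prop.

Definition indexical := run -> nat -> 'I_n -> Prop.

Unset Implicit Arguments.
Variable P : protocol.
Set Implicit Arguments.

Definition valid (phi : formula) : Prop :=
  forall r m, is_run P r -> phi r m.

Definition K (i : 'I_n) (phi : formula) : formula :=
  fun r m => forall r' m', is_run P r' -> gloc (r' m') i = gloc (r m) i -> phi r' m'.

Definition Bel (S : indexical) (i : 'I_n) (phi : formula) : formula :=
  K i (fun r m => S r m i -> phi r m).

Definition EB (S : indexical) (phi : formula) : formula :=
  fun r m => forall i, S r m i -> Bel S i phi r m.

Definition CB (S : indexical) (phi : formula) : formula :=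
  fun r m => forall k, iter k.+1 (EB S) phi r m.

Definition decides (i : 'I_n) (v : V) : formula :=
  fun r m => P i (gloc (r m) i) = decide v.

(* Some agent's initial preference in r is v (init_j is preserved by
   transitions, so it is read off at time 0). *)
Definition exists_val (v : V) : formula :=
  fun r _ => exists j, init (gloc (r 0) j) = v.

Definition SBA (S : indexical) : Prop :=
  forall r, is_run P r ->
    (forall i m m' v v', decides i v r m -> decides i v' r m' -> m = m') /\
    (forall i m v, S r m i -> decides i v r m ->
        forall j, S r m j -> decides j v r m) /\
    (forall i m v, S r m i -> decides i v r m -> exists_val v r m).

End Model.

From mathcomp Require Import all_boot.

Set Implicit Arguments.
Unset Strict Implicit.
Unset Printing Implicit Defensive.

(* Once some member of S decides v, simultaneous agreement makes every member
   of S decide v at that point, and a member's decision is a function of its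
   local state; so "some member of S decides v" implies E^B_S of itself.
   Iterating, it implies every (E^B_S)^k of validity's conclusion "exists v". *)

Section DecisionKnowledge.

Variables (n : nat) (V : Type) (E : InfoExchange n V) (F : FailureModel E).
Variables (P : protocol E) (S : indexical F).

Definition decided_in (v : V) : formula F :=
  fun r m => exists2 j, S r m j & decides P j v r m.

Lemma decides_local (i : 'I_n) (v : V) (r r' : run F) (m m' : nat) :
  gloc (r' m') i = gloc (r m) i -> decides P i v r m -> decides P i v r' m'.
Proof. by rewrite /decides => ->. Qed.

Lemma EB_mono (phi psi : formula F) :
  (forall r m, is_run P r -> phi r m -> psi r m) ->
  forall r m, EB P S phi r m -> EB P S psi r m.
Proof.
move=> phi_psi r m EBphi j Sj r' m' r'_run eq_loc Sj'.
by apply: phi_psi r'_run (EBphi j Sj r' m' r'_run eq_loc Sj').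
Qed.

Hypothesis sba : SBA P S.

Lemma decided_in_exists_val (v : V) (r : run F) (m : nat) :
  is_run P r -> decided_in v r m -> exists_val v r m.
Proof.
move=> r_run [j Sj Dj].
have [_ [_ valid_v]] := sba r_run.
exact: valid_v Sj Dj.
Qed.

Lemma decided_in_EB (v : V) (r : run F) (m : nat) :
  is_run P r -> decided_in v r m -> EB P S (decided_in v) r m.
Proof.
move=> r_run [j Sj Dj] l Sl r' m' _ eq_loc Sl'.
have [_ [agree _]] := sba r_run.
by exists l => //; apply: decides_local eq_loc (agree _ _ _ Sj Dj _ Sl).
Qed.

Lemma decided_in_iter_EB (v : V) (k : nat) (r : run F) (m : nat) :
  is_run P r -> decided_in v r m -> iter k (EB P S) (exists_val v) r m.
Proof.
elim: k r m => [|k IHk] r m r_run Dv /=; first exact: decided_in_exists_val.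
by apply: EB_mono IHk _ _ _; apply: decided_in_EB.
Qed.

End DecisionKnowledge.

Theorem lemma7 (n : nat) (V : Type) (E : InfoExchange n V)
  (F : FailureModel E) (P : protocol E) (S : indexical F) :
  SBA P S ->
  forall (i : 'I_n) (v : V),
    valid P (fun r m => decides P i v r m -> Bel P S i (CB P S (exists_val v)) r m).
Proof.
move=> sba i v r m _ Dv r' m' r'_run eq_loc Si k.
apply: (decided_in_iter_EB sba k.+1 r'_run).
by exists i => //; apply: decides_local eq_loc Dv.
Qed.
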